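(* Let $\lambda>1$, $b>0$, $a\in\mathbb{R}$ and consider $$x_{n+1}=x_{n-1}^{\lambda}e^{a-bx_n-x_{n-1}},\qquad n\ge1,$$ with non-negative initial values $x_0,x_1$. (a) Every non-negative solution converges to $0$ if and only if $a<(\lambda-1)[1-\ln(\lambda-1)]$. (b) If $(\lambda-1)[1-\ln(\lambda-1)]<a<(\lambda-1)[1-\ln(\lambda-1)+\ln(b+1)]$, then the equation has no positive fixed points, but it has solutions with all terms positive that do not converge to $0$. (c) Assume $b\le\frac{\lambda-1}{\lambda}e^{1/(\lambda-1)}-1$ and $(\lambda-1)[1-\ln(\lambda-1)+\ln(b+1)]\le a\le\lambda-(\lambda-1)\ln\lambda$, and let $x^*$ be the smallest positive fixed point of the equation (i.e. the smallest positive solution of $x=x^\lambda e^{a-(b+1)x}$). Then there are initial values $x_0,x_1\in(0,x^* )$ whose solution is positive and does not converge to $0$. (d) Under the hypotheses of (c), for every initial pair $(x_0,x_1)\in([x^*,\lambda]\times[0,x^*])\cup([0,x^*]\times[x^*,\lambda])$ the corresponding solution does not converge to $0$.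
   Context: A fixed point of the equation is a positive number $x$ with $x=x^{\lambda}e^{a-(b+1)x}$. *)

From Stdlib Require Import Reals.
Open Scope R_scope.

(* Real power for non-negative bases: x^l = exp(l ln x) for x > 0, and 0^l = 0
   (the convention for l > 0; Stdlib's Rpower 0 l would give 1). *)
Definition rpow (x l : R) : R := if Rlt_dec 0 x then Rpower x l else 0.

Definition step (a b lam xprev xcur : R) : R :=
  rpow xprev lam * exp (a - b * xcur - xprev).

Fixpoint sol_pair (a b lam x0 x1 : R) (n : nat) : R * R :=
  match n with
  | O => (x0, x1)
  | S k => let p := sol_pair a b lam x0 x1 k in (snd p, step a b lam (fst p) (snd p))
  end.

Definition sol (a b lam x0 x1 : R) (n : nat) : R := fst (sol_pair a b lam x0 x1 n).

Definition is_pos_fixed (a b lam x : R) : Prop :=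
  0 < x /\ x = rpow x lam * exp (a - (b + 1) * x).

Definition is_smallest_pos_fixed (a b lam x : R) : Prop :=
  is_pos_fixed a b lam x /\ (forall y, is_pos_fixed a b lam y -> x <= y).

(* Write the recursion as x_{n+1} = h_{a - b x_n}(x_{n-1}), where h_c(x) = x^lam e^(c - x) is
   [hump lam c x].  The tangent-line bound ln x <= ln y + (x - y)/y shows that x^(lam-1) e^(-x)
   is maximal at x = lam - 1, i.e. h_c(x) <= e^(c - a_crit) x with
   a_crit = (lam-1)(1 - ln(lam-1)); so for a < a_crit the even and the odd subsequences
   contract geometrically, while for a = a_crit the pair (lam - 1, 0) is 2-periodic.  For
   a > a_crit start with a small x_1 = eps: the odd terms then stay below eps, and the even
   terms are pushed up at lam - 1 and down at eps.  The initial values x_0 whose even terms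
   first leave [eps, lam - 1] downwards, resp. upwards, form two disjoint open sets, so by
   connectedness some x_0 leaves in neither direction.  The same tangent-line bound excludes
   fixed points in (b).  For (c) and (d), h_c is increasing on [0, lam] and h_a(lam) <= lam,
   so two steps of the recursion map the rectangle [x*, lam] x [0, x*] into itself. *)
From Stdlib Require Import Reals Lra Lia Classical.
Open Scope R_scope.

Lemma exp_le_mono x y : x <= y -> exp x <= exp y.
Proof. intros [Hlt | ->]; [left; now apply exp_increasing | lra]. Qed.

Lemma exp_lt_1 x : x < 0 -> exp x < 1.
Proof. intros Hx. rewrite <- exp_0. now apply exp_increasing. Qed.

Lemma exp_gt_1 x : 0 < x -> 1 < exp x.
Proof. intros Hx. rewrite <- exp_0. now apply exp_increasing. Qed.

Lemma ln_le_mono x y : 0 < x -> x <= y -> ln x <= ln y.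
Proof. intros Hx [Hlt | ->]; [left; now apply ln_increasing | lra]. Qed.

Lemma mul_ln_sub_le k x y : 0 <= k -> 0 < x -> 0 < y ->
  k * (ln x - ln y) <= k / y * (x - y).
Proof.
  intros Hk Hx Hy.
  assert (Hxy : 0 < x / y) by (apply Rdiv_lt_0_compat; lra).
  assert (Hln : ln x = ln y + ln (x / y)).
  { rewrite <- ln_mult by lra. f_equal. field. lra. }
  assert (Htangent : ln (x / y) <= x / y - 1).
  { pose proof (exp_ineq1_le (ln (x / y))) as E. rewrite exp_ln in E; lra. }
  replace (k / y * (x - y)) with (k * (x / y - 1)) by (field; lra).
  apply Rmult_le_compat_l; lra.
Qed.

Lemma mul_ln_sub_le_max k m x : 0 < k -> 0 < m -> 0 < x ->
  k * ln x - m * x <= k * ln (k / m) - k.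
Proof.
  intros Hk Hm Hx.
  pose proof (mul_ln_sub_le k x (k / m) ltac:(lra) Hx ltac:(apply Rdiv_lt_0_compat; lra)) as D.
  replace (k / (k / m) * (x - k / m)) with (m * x - k) in D by (field; lra).
  lra.
Qed.

Lemma rpow_pos x l : 0 < x -> rpow x l = exp (l * ln x).
Proof. intros Hx. unfold rpow. destruct (Rlt_dec 0 x); [reflexivity | lra]. Qed.

Lemma rpow_nonpos x l : x <= 0 -> rpow x l = 0.
Proof. intros Hx. unfold rpow. destruct (Rlt_dec 0 x); [lra | reflexivity]. Qed.

Lemma rpow_ge0 x l : 0 <= rpow x l.
Proof. unfold rpow. destruct (Rlt_dec 0 x); [left; apply exp_pos | lra]. Qed.

Definition hump (lam c x : R) : R := rpow x lam * exp (c - x).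

Definition a_crit (lam : R) : R := (lam - 1) * (1 - ln (lam - 1)).

Lemma step_hump a b lam u v : step a b lam u v = hump lam (a - b * v) u.
Proof. reflexivity. Qed.

Lemma hump_exp lam c x : 0 < x -> hump lam c x = exp (lam * ln x + c - x).
Proof.
  intros Hx. unfold hump. rewrite rpow_pos by lra. rewrite <- exp_plus. f_equal. ring.
Qed.

Lemma hump_mul_exp lam c x : 0 < x ->
  hump lam c x = x * exp ((lam - 1) * ln x + c - x).
Proof.
  intros Hx. rewrite hump_exp by lra.
  replace (lam * ln x + c - x) with (ln x + ((lam - 1) * ln x + c - x)) by ring.
  rewrite exp_plus, exp_ln by lra. reflexivity.
Qed.

Lemma hump_nonpos lam c x : x <= 0 -> hump lam c x = 0.
Proof. intros Hx. unfold hump. rewrite rpow_nonpos by lra. ring. Qed.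

Lemma hump_ge0 lam c x : 0 <= hump lam c x.
Proof. unfold hump. apply Rmult_le_pos; [apply rpow_ge0 | left; apply exp_pos]. Qed.

Lemma hump_pos lam c x : 0 < x -> 0 < hump lam c x.
Proof. intros Hx. rewrite hump_exp by lra. apply exp_pos. Qed.

Lemma hump_le_shift lam c c' x : c <= c' -> hump lam c x <= hump lam c' x.
Proof.
  intros Hc. unfold hump. apply Rmult_le_compat_l; [apply rpow_ge0 |].
  apply exp_le_mono. lra.
Qed.

Lemma hump_le_incr lam c x y : 0 <= lam -> 0 <= x <= y -> y <= lam ->
  hump lam c x <= hump lam c y.
Proof.
  intros Hlam Hxy Hy.
  destruct (Rle_lt_dec x 0) as [Hx0 | Hx0].
  { rewrite hump_nonpos by lra. apply hump_ge0. }
  rewrite !hump_exp by lra. apply exp_le_mono.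
  pose proof (mul_ln_sub_le lam x y Hlam Hx0 ltac:(lra)) as D.
  assert (1 <= lam / y).
  { apply Rmult_le_reg_r with y; [lra |].
    unfold Rdiv. rewrite Rmult_assoc, Rinv_l by lra. lra. }
  nra.
Qed.

Lemma hump_lt_self lam c x : 0 < x -> (lam - 1) * ln x + c <= 0 -> hump lam c x < x.
Proof.
  intros Hx Hc. rewrite hump_mul_exp by lra.
  assert (exp ((lam - 1) * ln x + c - x) < 1) by (apply exp_lt_1; lra).
  nra.
Qed.

Lemma hump_at_lam_sub1 lam c : 1 < lam -> hump lam c (lam - 1) = (lam - 1) * exp (c - a_crit lam).
Proof.
  intros Hlam. rewrite hump_mul_exp by lra. f_equal. f_equal. unfold a_crit. ring.
Qed.

Lemma hump_le_lin lam c x : 1 < lam -> 0 <= x -> hump lam c x <= exp (c - a_crit lam) * x.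
Proof.
  intros Hlam Hx.
  destruct (Rle_lt_dec x 0) as [Hx0 | Hx0].
  { rewrite hump_nonpos by lra. replace x with 0 by lra. lra. }
  rewrite hump_mul_exp by lra. rewrite Rmult_comm.
  apply Rmult_le_compat_r; [lra |]. apply exp_le_mono.
  pose proof (mul_ln_sub_le_max (lam - 1) 1 x ltac:(lra) ltac:(lra) Hx0) as D.
  rewrite Rdiv_1_r in D. unfold a_crit. lra.
Qed.

Lemma sol_0 a b lam x0 x1 : sol a b lam x0 x1 0 = x0.
Proof. reflexivity. Qed.

Lemma sol_SS a b lam x0 x1 n :
  sol a b lam x0 x1 (S (S n)) = step a b lam (sol a b lam x0 x1 n) (sol a b lam x0 x1 (S n)).
Proof. reflexivity. Qed.

Lemma sol_shift a b lam x0 x1 n :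
  sol a b lam x0 x1 (S n) = sol a b lam x1 (step a b lam x0 x1) n.
Proof.
  unfold sol. f_equal. induction n as [| n IH]; [reflexivity |].
  change (sol_pair a b lam x0 x1 (S (S n)))
    with (let p := sol_pair a b lam x0 x1 (S n) in (snd p, step a b lam (fst p) (snd p))).
  rewrite IH. reflexivity.
Qed.

Lemma sol_shift2 a b lam x0 x1 n :
  sol a b lam x0 x1 (S (S n))
  = sol a b lam (step a b lam x0 x1) (step a b lam x1 (step a b lam x0 x1)) n.
Proof. now rewrite !sol_shift. Qed.

Lemma sol_nonneg a b lam n : forall x0 x1, 0 <= x0 -> 0 <= x1 -> 0 <= sol a b lam x0 x1 n.
Proof.
  induction n as [| n IH]; intros x0 x1 H0 H1; [exact H0 |].
  rewrite sol_shift. apply IH; [exact H1 | apply hump_ge0].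
Qed.

Lemma sol_pos a b lam n : forall x0 x1, 0 < x0 -> 0 < x1 -> 0 < sol a b lam x0 x1 n.
Proof.
  induction n as [| n IH]; intros x0 x1 H0 H1; [exact H0 |].
  rewrite sol_shift. apply IH; [exact H1 | now apply hump_pos].
Qed.

Lemma sol_cv_shift a b lam x0 x1 l :
  Un_cv (sol a b lam x0 x1) l -> Un_cv (sol a b lam x1 (step a b lam x0 x1)) l.
Proof.
  intros Hcv eps Heps. destruct (Hcv eps Heps) as [N HN].
  exists N. intros n Hn. rewrite <- sol_shift. apply HN. lia.
Qed.

Lemma two_step_contraction_cv (s : nat -> R) q :
  0 <= q < 1 -> (forall n, 0 <= s n) -> (forall n, s (S (S n)) <= q * s n) -> Un_cv s 0.
Proof.
  intros Hq Hs Hcontr.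
  set (C := s 0%nat + s 1%nat).
  assert (Hbound : forall n, s n <= q ^ Nat.div2 n * C /\ s (S n) <= q ^ Nat.div2 (S n) * C).
  { induction n as [| n [IH IH']].
    - simpl. unfold C. pose proof (Hs 0%nat). pose proof (Hs 1%nat). lra.
    - split; [exact IH' |].
      change (q ^ Nat.div2 (S (S n))) with (q * q ^ Nat.div2 n).
      eapply Rle_trans; [apply Hcontr |]. rewrite Rmult_assoc.
      apply Rmult_le_compat_l; lra. }
  intros eps Heps.
  assert (HC : 0 <= C) by (unfold C; pose proof (Hs 0%nat); pose proof (Hs 1%nat); lra).
  destruct (pow_lt_1_zero q ltac:(rewrite Rabs_pos_eq; lra) (eps / (C + 1)))
    as [N HN]; [apply Rdiv_lt_0_compat; lra |].
  exists (2 * N)%nat. intros n Hn. unfold Rdist. rewrite Rminus_0_r, Rabs_pos_eq by apply Hs.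
  specialize (HN (Nat.div2 n) ltac:(apply Nat.div2_le_lower_bound; lia)).
  destruct (Hbound n) as [Hsn _].
  set (r := q ^ Nat.div2 n) in *.
  assert (Hr : 0 <= r) by (apply pow_le; lra).
  rewrite Rabs_pos_eq in HN by exact Hr.
  assert (r * (C + 1) < eps).
  { apply Rmult_lt_reg_r with (/ (C + 1)); [apply Rinv_0_lt_compat; lra |].
    rewrite Rmult_assoc, Rinv_r by lra. lra. }
  nra.
Qed.

Lemma not_cv_0_of_even_ge (s : nat -> R) m :
  0 < m -> (forall k, m <= s (2 * k)%nat) -> ~ Un_cv s 0.
Proof.
  intros Hm Hs Hcv. destruct (Hcv m Hm) as [N HN].
  specialize (HN (2 * N)%nat ltac:(lia)). specialize (Hs N).
  unfold Rdist in HN. rewrite Rminus_0_r in HN.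
  pose proof (Rle_abs (s (2 * N)%nat)). lra.
Qed.

Lemma sol_cv_0 a b lam x0 x1 : 1 < lam -> 0 <= b -> a < a_crit lam -> 0 <= x0 -> 0 <= x1 ->
  Un_cv (sol a b lam x0 x1) 0.
Proof.
  intros Hlam Hb Ha H0 H1.
  pose proof (sol_nonneg a b lam) as Hnn.
  apply two_step_contraction_cv with (exp (a - a_crit lam)).
  - split; [left; apply exp_pos |]. apply exp_lt_1. lra.
  - intro n. now apply Hnn.
  - intro n. rewrite sol_SS, step_hump.
    specialize (Hnn n x0 x1 H0 H1) as Hu. specialize (Hnn (S n) x0 x1 H0 H1) as Hv.
    eapply Rle_trans; [apply hump_le_shift with (c' := a); nra |].
    now apply hump_le_lin.
Qed.

Lemma sol_crit_even a b lam k : 1 < lam -> a = a_crit lam ->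
  sol a b lam (lam - 1) 0 (2 * k) = lam - 1.
Proof.
  intros Hlam Ha.
  assert (Hup : step a b lam (lam - 1) 0 = lam - 1).
  { rewrite step_hump, hump_at_lam_sub1 by lra. rewrite Ha.
    replace (a_crit lam - b * 0 - a_crit lam) with 0 by ring. rewrite exp_0. ring. }
  assert (Hdown : step a b lam 0 (lam - 1) = 0) by (apply hump_nonpos; lra).
  induction k as [| k IH]; [reflexivity |].
  replace (2 * S k)%nat with (S (S (2 * k))) by lia.
  now rewrite sol_shift2, Hup, Hdown.
Qed.

Lemma pos_fixed_ln a b lam x : is_pos_fixed a b lam x -> (lam - 1) * ln x + a - (b + 1) * x = 0.
Proof.
  intros [Hx Hfix]. rewrite rpow_pos in Hfix by lra. rewrite <- exp_plus in Hfix.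
  apply (f_equal ln) in Hfix. rewrite ln_exp in Hfix. lra.
Qed.

Lemma no_pos_fixed a b lam x : 1 < lam -> 0 < b ->
  a < (lam - 1) * (1 - ln (lam - 1) + ln (b + 1)) -> ~ is_pos_fixed a b lam x.
Proof.
  intros Hlam Hb Ha Hfix. pose proof (pos_fixed_ln _ _ _ _ Hfix) as E. destruct Hfix as [Hx _].
  pose proof (mul_ln_sub_le_max (lam - 1) (b + 1) x ltac:(lra) ltac:(lra) Hx) as D.
  assert (Hln : ln (lam - 1) = ln ((lam - 1) / (b + 1)) + ln (b + 1)).
  { rewrite <- ln_mult by (try apply Rdiv_lt_0_compat; lra). f_equal. field. lra. }
  nra.
Qed.

Definition near (c : R) (P : R -> Prop) : Prop :=
  exists d, 0 < d /\ forall y, Rabs (y - c) < d -> P y.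

Lemma near_and c (P Q : R -> Prop) : near c P -> near c Q -> near c (fun y => P y /\ Q y).
Proof.
  intros [d1 [Hd1 P1]] [d2 [Hd2 P2]]. exists (Rmin d1 d2). split; [now apply Rmin_pos |].
  intros y Hy. pose proof (Rmin_l d1 d2). pose proof (Rmin_r d1 d2).
  split; [apply P1 | apply P2]; lra.
Qed.

Lemma near_forall_lt c N (P : nat -> R -> Prop) :
  (forall k, (k < N)%nat -> near c (P k)) -> near c (fun y => forall k, (k < N)%nat -> P k y).
Proof.
  induction N as [| N IH]; intros HP.
  - exists 1. split; [lra |]. intros; lia.
  - assert (Hlow : near c (fun y => forall k, (k < N)%nat -> P k y))
      by (apply IH; intros k Hk; apply HP; lia).
    destruct (near_and c _ _ Hlow (HP N ltac:(lia))) as [d [Hd Hnear]].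
    exists d. split; [exact Hd |]. intros y Hy k Hk.
    destruct (Hnear y Hy) as [Hbelow HN].
    destruct (Nat.eq_dec k N) as [-> | Hne]; [exact HN | apply Hbelow; lia].
Qed.

Lemma near_of_continuity g c : continuity_pt g c -> forall e, 0 < e ->
  near c (fun y => Rabs (g y - g c) < e).
Proof.
  intros Hg e He. destruct (Hg e He) as [d [Hd Hclose]].
  exists d. split; [exact Hd |]. intros y Hy.
  destruct (Req_dec y c) as [-> | Hne]; [rewrite Rminus_diag, Rabs_R0; exact He |].
  exact (Hclose y (conj (conj I (not_eq_sym Hne)) Hy)).
Qed.

Lemma near_lt_of_continuity g c C : continuity_pt g c -> g c < C -> near c (fun y => g y < C).
Proof.
  intros Hg Hlt. destruct (near_of_continuity g c Hg (C - g c) ltac:(lra)) as [d [Hd Hn]].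
  exists d. split; [exact Hd |]. intros y Hy. specialize (Hn y Hy). apply Rabs_def2 in Hn. lra.
Qed.

Lemma near_gt_of_continuity g c C : continuity_pt g c -> C < g c -> near c (fun y => C < g y).
Proof.
  intros Hg Hlt. destruct (near_of_continuity g c Hg (g c - C) ltac:(lra)) as [d [Hd Hn]].
  exists d. split; [exact Hd |]. intros y Hy. specialize (Hn y Hy). apply Rabs_def2 in Hn. lra.
Qed.

Lemma continuity_pt_step a b lam (u v : R -> R) c :
  continuity_pt u c -> continuity_pt v c -> 0 < u c ->
  continuity_pt (fun x => step a b lam (u x) (v x)) c.
Proof.
  intros Hu Hv Hpos.
  destruct (near_gt_of_continuity u c 0 Hu Hpos) as [d [Hd Hnear]].
  apply (continuity_pt_locally_ext (fun x => exp (lam * ln (u x) + (a - b * v x) - u x)) _ d c Hd).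
  { intros y Hy. rewrite step_hump, hump_exp; [reflexivity | now apply Hnear]. }
  apply (continuity_pt_comp (fun x => lam * ln (u x) + (a - b * v x) - u x) exp).
  2: apply derivable_continuous_pt, derivable_pt_exp.
  apply (continuity_pt_minus (fun x => lam * ln (u x) + (a - b * v x)) u); [| exact Hu].
  apply (continuity_pt_plus (fun x => lam * ln (u x)) (fun x => a - b * v x)).
  - apply (continuity_pt_scal (fun x => ln (u x))), (continuity_pt_comp u ln); [exact Hu |].
    apply derivable_continuous_pt. exists (/ u c). now apply derivable_pt_lim_ln.
  - apply (continuity_pt_minus (fun _ => a) (fun x => b * v x)).
    + apply continuity_pt_const. intros ? ?; reflexivity.
    + now apply (continuity_pt_scal v).
Qed.

Lemma sol_continuity a b lam x1 c : 0 < x1 -> 0 < c ->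
  forall n, continuity_pt (fun x => sol a b lam x x1 n) c.
Proof.
  intros H1 Hc.
  assert (Hpair : forall n, continuity_pt (fun x => sol a b lam x x1 n) c
                            /\ continuity_pt (fun x => sol a b lam x x1 (S n)) c).
  { induction n as [| n [IH IH']].
    - split; [apply derivable_continuous_pt, derivable_pt_id |].
      apply continuity_pt_const. intros ? ?; reflexivity.
    - split; [exact IH' |].
      apply continuity_pt_step; [exact IH | exact IH' | now apply sol_pos]. }
  intro n. apply Hpair.
Qed.

Definition exits_below (u : nat -> R) (lo hi : R) : Prop :=
  exists N, u N < lo /\ forall k, (k < N)%nat -> u k < hi.

Definition exits_above (u : nat -> R) (lo hi : R) : Prop :=
  exists N, hi < u N /\ forall k, (k < N)%nat -> lo < u k.

Lemma exits_below_above_disjoint u lo hi :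
  lo <= hi -> exits_below u lo hi -> exits_above u lo hi -> False.
Proof.
  intros Hlh [N1 [H1 B1]] [N2 [H2 B2]].
  destruct (Nat.lt_total N1 N2) as [Hlt | [-> | Hgt]].
  - specialize (B2 N1 Hlt). lra.
  - lra.
  - specialize (B1 N2 Hgt). lra.
Qed.

Lemma exits_below_near (f : nat -> R -> R) lo hi c :
  (forall k, continuity_pt (f k) c) -> exits_below (fun k => f k c) lo hi ->
  near c (fun y => exits_below (fun k => f k y) lo hi).
Proof.
  intros Hf [N [HN Hk]].
  destruct (near_and c _ _ (near_lt_of_continuity _ _ _ (Hf N) HN)
              (near_forall_lt c N (fun k y => f k y < hi)
                 (fun k Hk' => near_lt_of_continuity _ _ _ (Hf k) (Hk k Hk'))))
    as [d [Hd Hnear]].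
  exists d. split; [exact Hd |]. intros y Hy. exists N. exact (Hnear y Hy).
Qed.

Lemma exits_above_near (f : nat -> R -> R) lo hi c :
  (forall k, continuity_pt (f k) c) -> exits_above (fun k => f k c) lo hi ->
  near c (fun y => exits_above (fun k => f k y) lo hi).
Proof.
  intros Hf [N [HN Hk]].
  destruct (near_and c _ _ (near_gt_of_continuity _ _ _ (Hf N) HN)
              (near_forall_lt c N (fun k y => lo < f k y)
                 (fun k Hk' => near_gt_of_continuity _ _ _ (Hf k) (Hk k Hk'))))
    as [d [Hd Hnear]].
  exists d. split; [exact Hd |]. intros y Hy. exists N. exact (Hnear y Hy).
Qed.

Lemma between_of_not_exits (u : nat -> R) lo hi :
  ~ exits_below u lo hi -> ~ exits_above u lo hi ->
  (forall k, u k = hi -> hi < u (S k)) -> (forall k, u k = lo -> u (S k) < lo) ->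
  forall k, lo <= u k <= hi.
Proof.
  intros Hnb Hna Hup Hdown.
  assert (Hnext : forall N, (forall k, (k < N)%nat -> lo <= u k <= hi) -> lo <= u N <= hi).
  { intros N IH. split.
    - destruct (Rlt_le_dec (u N) lo) as [Hlt | Hle]; [exfalso | exact Hle].
      apply Hnb. exists N. split; [exact Hlt |]. intros k Hk.
      destruct (Rlt_le_dec (u k) hi) as [Hk' | Hk']; [exact Hk' | exfalso].
      destruct (IH k Hk) as [Hlo Hhi]. specialize (Hup k ltac:(lra)).
      destruct (Nat.eq_dec (S k) N) as [<- | Hne]; [lra |].
      destruct (IH (S k) ltac:(lia)). lra.
    - destruct (Rlt_le_dec hi (u N)) as [Hlt | Hle]; [exfalso | exact Hle].
      apply Hna. exists N. split; [exact Hlt |]. intros k Hk.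
      destruct (Rlt_le_dec lo (u k)) as [Hk' | Hk']; [exact Hk' | exfalso].
      destruct (IH k Hk) as [Hlo Hhi]. specialize (Hdown k ltac:(lra)).
      destruct (Nat.eq_dec (S k) N) as [<- | Hne]; [lra |].
      destruct (IH (S k) ltac:(lia)). lra. }
  assert (Hall : forall N k, (k < N)%nat -> lo <= u k <= hi).
  { induction N as [| N IH]; intros k Hk; [lia |].
    destruct (Nat.eq_dec k N) as [-> | Hne]; [now apply Hnext | apply IH; lia]. }
  intro k. apply (Hall (S k)). lia.
Qed.

Lemma interval_not_split (U V : R -> Prop) p q :
  p <= q -> U p -> V q -> (forall x, U x -> V x -> False) ->
  (forall c, p <= c <= q -> U c -> near c U) -> (forall c, p <= c <= q -> V c -> near c V) ->
  exists c, p <= c <= q /\ ~ U c /\ ~ V c.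
Proof.
  intros Hpq Hp Hq Hdisj HU HV.
  set (A := fun x => x <= q /\ forall y, p <= y <= x -> U y).
  assert (HAp : A p) by (split; [lra | intros y Hy; now replace y with p by lra]).
  destruct (completeness A) as [c [Hub Hlub]].
  { exists q. intros x [Hx _]. exact Hx. }
  { exists p. exact HAp. }
  assert (Hpc : p <= c) by (apply Hub, HAp).
  assert (Hcq : c <= q) by (apply Hlub; intros x [Hx _]; exact Hx).
  assert (Hbelow : forall y, p <= y < c -> U y).
  { intros y Hy. destruct (classic (U y)) as [HUy | HUy]; [exact HUy | exfalso].
    assert (Hy_ub : is_upper_bound A y).
    { intros x [_ Hx]. destruct (Rle_lt_dec x y) as [Hxy | Hxy]; [exact Hxy |].
      exfalso. apply HUy, Hx. lra. }
    specialize (Hlub y Hy_ub). lra. }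
  exists c. split; [lra |]. split.
  - intro HUc. destruct (HU c ltac:(lra) HUc) as [d [Hd Hnear]].
    destruct (Rlt_le_dec c q) as [Hlt | Hge];
      [| apply (Hdisj q); [now replace q with c by lra | exact Hq]].
    set (x := Rmin (c + d / 2) q).
    assert (Hx : c < x <= c + d / 2) by (split; [apply Rmin_glb_lt | apply Rmin_l]; lra).
    assert (HAx : A x).
    { split; [apply Rmin_r |]. intros y Hy.
      destruct (Rlt_le_dec y c); [apply Hbelow; lra | apply Hnear; rewrite Rabs_pos_eq; lra]. }
    specialize (Hub x HAx). lra.
  - intro HVc. destruct (HV c ltac:(lra) HVc) as [d [Hd Hnear]].
    destruct (Rle_lt_dec c p) as [Hle | Hlt]; [apply (Hdisj p Hp); now replace p with c by lra |].
    set (y := Rmax p (c - d / 2)).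
    assert (Hy : c - d / 2 <= y < c) by (split; [apply Rmax_r | apply Rmax_lub_lt]; lra).
    apply (Hdisj y).
    + apply Hbelow. split; [apply Rmax_l | lra].
    + apply Hnear. rewrite Rabs_minus_sym, Rabs_pos_eq; lra.
Qed.

Lemma exists_small_eps a b lam : 1 < lam -> 0 < b -> a_crit lam < a ->
  exists eps, 0 < eps < lam - 1 /\ b * eps < a - a_crit lam /\ (lam - 1) * ln eps + a <= 0.
Proof.
  intros Hlam Hb Ha.
  set (e1 := (lam - 1) / 2). set (e2 := (a - a_crit lam) / (2 * b)).
  set (e3 := exp (- a / (lam - 1))).
  set (eps := Rmin (Rmin e1 e2) e3).
  assert (He1 : eps <= e1) by (eapply Rle_trans; apply Rmin_l).
  assert (He2 : eps <= e2) by (eapply Rle_trans; [apply Rmin_l | apply Rmin_r]).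
  assert (He3 : eps <= e3) by apply Rmin_r.
  assert (Hpos : 0 < eps).
  { apply Rmin_pos; [apply Rmin_pos; apply Rdiv_lt_0_compat; lra | apply exp_pos]. }
  exists eps. split; [unfold e1 in He1; lra |]. split.
  - apply Rmult_le_compat_l with (r := b) in He2; [| lra].
    replace (b * e2) with ((a - a_crit lam) / 2) in He2 by (unfold e2; field; lra).
    lra.
  - assert (Hln : ln eps <= - a / (lam - 1))
      by (rewrite <- (ln_exp (- a / (lam - 1))); now apply ln_le_mono).
    apply Rmult_le_compat_l with (r := lam - 1) in Hln; [| lra].
    replace ((lam - 1) * (- a / (lam - 1))) with (- a) in Hln by (field; lra).
    lra.
Qed.

Section Oscillation.

Variables a b lam eps : R.
Hypotheses (Hlam : 1 < lam) (Hb : 0 < b) (Heps : 0 < eps < lam - 1)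
  (Heps_b : b * eps < a - a_crit lam) (Heps_ln : (lam - 1) * ln eps + a <= 0).

Lemma sol_odd_small k : forall x0 x1, 0 < x0 -> 0 < x1 <= eps ->
  0 < sol a b lam x0 x1 (S (2 * k)) <= eps.
Proof.
  induction k as [| k IH]; intros x0 x1 H0 H1; [exact H1 |].
  replace (S (2 * S k)) with (S (S (S (2 * k)))) by lia.
  rewrite sol_shift2. apply IH; [now apply hump_pos |].
  set (x0' := step a b lam x0 x1).
  assert (Hx0' : 0 < x0') by now apply hump_pos.
  assert (step a b lam x1 x0' < x1).
  { apply hump_lt_self; [lra |].
    assert ((lam - 1) * ln x1 <= (lam - 1) * ln eps)
      by (apply Rmult_le_compat_l; [lra | now apply ln_le_mono]).
    nra. }
  split; [now apply hump_pos | lra].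
Qed.

Lemma sol_even_up x k : 0 < x ->
  sol a b lam x eps (2 * k) = lam - 1 -> lam - 1 < sol a b lam x eps (2 * S k).
Proof.
  intros Hx Hk. replace (2 * S k)%nat with (S (S (2 * k))) by lia.
  rewrite sol_SS, step_hump, Hk, hump_at_lam_sub1 by lra.
  destruct (sol_odd_small k x eps Hx ltac:(lra)).
  assert (1 < exp (a - b * sol a b lam x eps (S (2 * k)) - a_crit lam)) by (apply exp_gt_1; nra).
  nra.
Qed.

Lemma sol_even_down x k : 0 < x ->
  sol a b lam x eps (2 * k) = eps -> sol a b lam x eps (2 * S k) < eps.
Proof.
  intros Hx Hk. replace (2 * S k)%nat with (S (S (2 * k))) by lia.
  rewrite sol_SS, step_hump, Hk.
  destruct (sol_odd_small k x eps Hx ltac:(lra)).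
  apply hump_lt_self; nra.
Qed.

Lemma exists_sol_even_between :
  exists x0, 0 < x0 /\ forall k, eps <= sol a b lam x0 eps (2 * k) <= lam - 1.
Proof.
  set (f := fun k x => sol a b lam x eps (2 * k)).
  assert (Hcont : forall c, 0 < c -> forall k, continuity_pt (f k) c)
    by (intros c Hc k; apply sol_continuity; lra).
  destruct (interval_not_split (fun x => exits_below (fun k => f k x) eps (lam - 1))
              (fun x => exits_above (fun k => f k x) eps (lam - 1)) (eps / 2) lam)
    as [c [Hc [HUc HVc]]].
  - lra.
  - exists 0%nat. split; [unfold f; rewrite Nat.mul_0_r, sol_0; lra | intros; lia].
  - exists 0%nat. split; [unfold f; rewrite Nat.mul_0_r, sol_0; lra | intros; lia].
  - intros x. apply exits_below_above_disjoint. lra.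
  - intros c Hc. apply exits_below_near, Hcont. lra.
  - intros c Hc. apply exits_above_near, Hcont. lra.
  - exists c. split; [lra |].
    apply (between_of_not_exits (fun k => f k c)); [exact HUc | exact HVc | |].
    + intros k Hk. apply sol_even_up; [lra | exact Hk].
    + intros k Hk. apply sol_even_down; [lra | exact Hk].
Qed.

End Oscillation.

Lemma exists_pos_sol_not_cv a b lam : 1 < lam -> 0 < b -> a_crit lam < a ->
  exists x0 x1, 0 < x0 /\ 0 < x1 /\ ~ Un_cv (sol a b lam x0 x1) 0.
Proof.
  intros Hlam Hb Ha.
  destruct (exists_small_eps a b lam Hlam Hb Ha) as [eps [Heps [Heps_b Heps_ln]]].
  destruct (exists_sol_even_between a b lam eps Hlam Hb Heps Heps_b Heps_ln) as [x0 [Hx0 Hk]].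
  exists x0, eps. split; [exact Hx0 |]. split; [lra |].
  apply (not_cv_0_of_even_ge _ eps); [lra |]. intro k. apply Hk.
Qed.

Section Trap.

Variables a b lam xs : R.
Hypotheses (Hlam : 1 < lam) (Hb : 0 < b) (Ha : a <= lam - (lam - 1) * ln lam)
  (Hfix : is_pos_fixed a b lam xs).

Lemma hump_fixed : hump lam (a - b * xs) xs = xs.
Proof.
  destruct Hfix as [_ Hxs]. unfold hump.
  replace (a - b * xs - xs) with (a - (b + 1) * xs) by ring. now symmetry.
Qed.

Lemma fixed_lt_lam : xs < lam.
Proof.
  pose proof (pos_fixed_ln _ _ _ _ Hfix) as E. destruct Hfix as [Hxs _].
  destruct (Rlt_le_dec xs lam) as [| Hge]; [assumption | exfalso].
  pose proof (mul_ln_sub_le (lam - 1) xs lam ltac:(lra) Hxs ltac:(lra)) as D.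
  assert ((lam - 1) / lam * (xs - lam) <= xs - lam).
  { assert ((lam - 1) / lam <= 1).
    { apply Rmult_le_reg_r with lam; [lra |].
      unfold Rdiv. rewrite Rmult_assoc, Rinv_l by lra. lra. }
    nra. }
  nra.
Qed.

Lemma step_le_lam u v : 0 <= u <= lam -> 0 <= v -> step a b lam u v <= lam.
Proof.
  intros Hu Hv. rewrite step_hump.
  apply Rle_trans with (hump lam a lam).
  - eapply Rle_trans; [apply hump_le_shift with (c' := a); nra |].
    apply hump_le_incr; lra.
  - rewrite hump_exp by lra.
    apply Rle_trans with (exp (ln lam)); [apply exp_le_mono; lra | rewrite exp_ln; lra].
Qed.

Lemma step_ge_fixed u v : xs <= u <= lam -> v <= xs -> xs <= step a b lam u v.
Proof.
  intros Hu Hv. destruct Hfix as [Hxs _]. rewrite step_hump.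
  rewrite <- hump_fixed.
  eapply Rle_trans; [apply hump_le_incr with (y := u); lra |].
  apply hump_le_shift. nra.
Qed.

Lemma step_le_fixed v w : 0 <= v <= xs -> xs <= w -> step a b lam v w <= xs.
Proof.
  intros Hv Hw. pose proof fixed_lt_lam. rewrite step_hump.
  rewrite <- hump_fixed.
  eapply Rle_trans; [apply hump_le_shift with (c' := a - b * xs); nra |].
  apply hump_le_incr; lra.
Qed.

Definition in_trap (u v : R) : Prop := xs <= u <= lam /\ 0 <= v <= xs.

Lemma in_trap_next v w : 0 <= v <= xs -> xs <= w <= lam -> in_trap w (step a b lam v w).
Proof.
  intros Hv Hw. split; [exact Hw |].
  split; [apply hump_ge0 | apply step_le_fixed; lra].
Qed.

Lemma in_trap_step u v : in_trap u v ->
  in_trap (step a b lam u v) (step a b lam v (step a b lam u v)).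
Proof.
  intros [Hu Hv]. destruct Hfix as [Hxs _]. apply in_trap_next; [exact Hv |].
  split; [apply step_ge_fixed | apply step_le_lam]; lra.
Qed.

Lemma in_trap_not_cv x0 x1 : in_trap x0 x1 -> ~ Un_cv (sol a b lam x0 x1) 0.
Proof.
  intros Htrap. destruct Hfix as [Hxs _].
  apply (not_cv_0_of_even_ge _ xs Hxs). intro k. revert x0 x1 Htrap.
  induction k as [| k IH]; intros x0 x1 Htrap; [apply Htrap |].
  replace (2 * S k)%nat with (S (S (2 * k))) by lia.
  rewrite sol_shift2. now apply IH, in_trap_step.
Qed.

Lemma in_trap_swap_not_cv x0 x1 : 0 <= x0 <= xs -> xs <= x1 <= lam ->
  ~ Un_cv (sol a b lam x0 x1) 0.
Proof.
  intros Hx0 Hx1 Hcv.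
  apply (in_trap_not_cv x1 (step a b lam x0 x1)); [now apply in_trap_next |].
  now apply sol_cv_shift.
Qed.

Lemma exists_below_fixed_not_cv : exists x0 x1, 0 < x0 < xs /\ 0 < x1 < xs /\
  (forall n, 0 < sol a b lam x0 x1 n) /\ ~ Un_cv (sol a b lam x0 x1) 0.
Proof.
  pose proof fixed_lt_lam as Hxl. pose proof (pos_fixed_ln _ _ _ _ Hfix) as E.
  destruct Hfix as [Hxs _].
  set (t := b * xs / (2 * lam)).
  assert (Ht : 0 < t) by (apply Rdiv_lt_0_compat; nra).
  set (x0 := xs * exp (- t)).
  set (x1 := xs / 2).
  assert (Hx0 : 0 < x0 < xs).
  { pose proof (exp_pos (- t)). assert (exp (- t) < 1) by (apply exp_lt_1; lra).
    unfold x0. split; nra. }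
  set (w := step a b lam x0 x1).
  (* x0^lam = xs^lam e^(-b xs / 2) turns the term b x1 = b xs / 2 of the exponent into b xs. *)
  assert (Hw : xs <= w <= lam).
  { split; [| apply step_le_lam; unfold x1; lra].
    unfold w. rewrite step_hump, hump_exp by lra.
    assert (Hln : ln x0 = ln xs - t)
      by (unfold x0; rewrite ln_mult, ln_exp by (try apply exp_pos; lra); ring).
    rewrite Hln. apply Rle_trans with (exp (ln xs)); [rewrite exp_ln; lra | apply exp_le_mono].
    replace (lam * (ln xs - t)) with (lam * ln xs - b * xs / 2) by (unfold t; field; lra).
    unfold x1. lra. }
  assert (Htrap : in_trap w (step a b lam x1 w))
    by (apply in_trap_next; [unfold x1; lra | exact Hw]).
  exists x0, x1. split; [exact Hx0 |]. split; [unfold x1; lra |]. split.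
  - intro n. apply sol_pos; unfold x1; lra.
  - intro Hcv. apply (in_trap_not_cv _ _ Htrap).
    now apply sol_cv_shift, sol_cv_shift.
Qed.

End Trap.

Theorem mainTheorem10 (lam b a : R) (Hlam : 1 < lam) (Hb : 0 < b) :
  (* (a) *)
  ((forall x0 x1, 0 <= x0 -> 0 <= x1 -> Un_cv (sol a b lam x0 x1) 0) <->
     a < (lam - 1) * (1 - ln (lam - 1)))
  /\
  (* (b) *)
  ((lam - 1) * (1 - ln (lam - 1)) < a ->
   a < (lam - 1) * (1 - ln (lam - 1) + ln (b + 1)) ->
   (~ exists x, is_pos_fixed a b lam x) /\
   (exists x0 x1, (forall n, 0 < sol a b lam x0 x1 n) /\
                  ~ Un_cv (sol a b lam x0 x1) 0))
  /\
  (* (c) and (d) *)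
  (b <= (lam - 1) / lam * exp (1 / (lam - 1)) - 1 ->
   (lam - 1) * (1 - ln (lam - 1) + ln (b + 1)) <= a ->
   a <= lam - (lam - 1) * ln lam ->
   forall xs, is_smallest_pos_fixed a b lam xs ->
   (exists x0 x1, 0 < x0 < xs /\ 0 < x1 < xs /\
      (forall n, 0 < sol a b lam x0 x1 n) /\ ~ Un_cv (sol a b lam x0 x1) 0)
   /\
   (forall x0 x1,
      ((xs <= x0 <= lam /\ 0 <= x1 <= xs) \/ (0 <= x0 <= xs /\ xs <= x1 <= lam)) ->
      ~ Un_cv (sol a b lam x0 x1) 0)).
Proof.
  fold (a_crit lam). split; [split | split].
  - intros Hall. destruct (Rlt_le_dec a (a_crit lam)) as [| Hge]; [assumption | exfalso].
    destruct (Rle_lt_or_eq_dec _ _ Hge) as [Hgt | Heq].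
    + destruct (exists_pos_sol_not_cv a b lam Hlam Hb Hgt) as [x0 [x1 [H0 [H1 Hncv]]]].
      apply Hncv, Hall; lra.
    + apply (not_cv_0_of_even_ge (sol a b lam (lam - 1) 0) (lam - 1)); [lra | | apply Hall; lra].
      intro k. rewrite sol_crit_even by (lra || now symmetry). lra.
  - intros Ha x0 x1 H0 H1. apply sol_cv_0; lra.
  - intros Hgt Hlt. split; [intros [x Hx]; exact (no_pos_fixed a b lam x Hlam Hb Hlt Hx) |].
    destruct (exists_pos_sol_not_cv a b lam Hlam Hb Hgt) as [x0 [x1 [H0 [H1 Hncv]]]].
    exists x0, x1. split; [intro n; now apply sol_pos | exact Hncv].
  - intros _ _ Ha xs [Hfix _]. split; [now apply exists_below_fixed_not_cv |].
    intros x0 x1 [Htrap | [Hx0 Hx1]].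
    + now apply (in_trap_not_cv a b lam xs).
    + now apply (in_trap_swap_not_cv a b lam xs).
Qed.
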